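(* Let $\mathcal{A}$ and $\mathcal{B}$ be quantum automata over the same alphabet $\Sigma$ and $a,b\in\mathbb{C}$ with $|a|^2+|b|^2=1$. Then for every $w\in\Sigma^\omega$: (1) $|a|^2f^{\mathrm{ND}}_{\mathcal{A}}(w)+|b|^2f^{\mathrm{ND}}_{\mathcal{B}}(w)\ge f^{\mathrm{ND}}_{a\mathcal{A}\oplus b\mathcal{B}}(w)\ge\max\{|a|^2f^{\mathrm{ND}}_{\mathcal{A}}(w),|b|^2f^{\mathrm{ND}}_{\mathcal{B}}(w)\}\ge f^{\mathrm{ND}}_{a\mathcal{A}\oplus b\mathcal{B}}(w)/2$; (2) $f^{\mathrm{ND}}_{\mathcal{A}\otimes\mathcal{B}}(w)\le f^{\mathrm{ND}}_{\mathcal{A}}(w)f^{\mathrm{ND}}_{\mathcal{B}}(w)$; (3) $f^{\mathrm{ND}}_{\mathcal{A}}(w)+f^{\mathrm{ND}}_{\mathcal{A}^\perp}(w)\ge1$, with equality if and only if $\lim_{n\to\infty}f^{\mathrm{MO}}_{\mathcal{A}}(w_n)$ exists.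
   Context: A quantum automaton is a tuple $\mathcal{A}=(\mathcal{H},|s_0\rangle,\Sigma,\{U_\sigma:\sigma\in\Sigma\},F)$ where $\mathcal{H}$ is a finite-dimensional complex Hilbert space, $|s_0\rangle$ a unit vector, $\Sigma$ a finite alphabet, each $U_\sigma$ unitary, and $F$ a subspace with projection $P_F$. For finite $x=\sigma_1\cdots\sigma_m$, $U_x=U_{\sigma_m}\cdots U_{\sigma_1}$ and $f^{\mathrm{MO}}_{\mathcal{A}}(x)=\|P_FU_x|s_0\rangle\|^2$. For $w\in\Sigma^\omega$ with prefixes $w_n$, the non-disturbing run is $|s_n\rangle=U_{w_n}|s_0\rangle$ and $f^{\mathrm{ND}}_{\mathcal{A}}(w)=\sup_{|\psi\rangle}\sup_{\{n_i\}}\inf_{i\ge1}|\langle\psi|s_{n_i}\rangle|^2$ over unit $|\psi\rangle\in F$ and strictly increasing $0\le n_1<n_2<\cdots$. Operations, for $\mathcal{A}=(\mathcal{H}^{\mathcal{A}},|s_0^{\mathcal{A}}\rangle,\Sigma,\{U^{\mathcal{A}}_\sigma\},F^{\mathcal{A}})$ and $\mathcal{B}=(\mathcal{H}^{\mathcal{B}},|s_0^{\mathcal{B}}\rangle,\Sigma,\{U^{\mathcal{B}}_\sigma\},F^{\mathcal{B}})$: the weighted direct sum $a\mathcal{A}\oplus b\mathcal{B}=(\mathcal{H}^{\mathcal{A}}\oplus\mathcal{H}^{\mathcal{B}},a|s_0^{\mathcal{A}}\rangle\oplus b|s_0^{\mathcal{B}}\rangle,\Sigma,\{U^{\mathcal{A}}_\sigma\oplus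 U^{\mathcal{B}}_\sigma\},F^{\mathcal{A}}\oplus F^{\mathcal{B}})$; the tensor product $\mathcal{A}\otimes\mathcal{B}=(\mathcal{H}^{\mathcal{A}}\otimes\mathcal{H}^{\mathcal{B}},|s_0^{\mathcal{A}}\rangle\otimes|s_0^{\mathcal{B}}\rangle,\Sigma,\{U^{\mathcal{A}}_\sigma\otimes U^{\mathcal{B}}_\sigma\},F^{\mathcal{A}}\otimes F^{\mathcal{B}})$; the ortho-complement $\mathcal{A}^\perp$ is $\mathcal{A}$ with $F$ replaced by its orthogonal complement $F^\perp$. *)

From HB Require Import structures.
From mathcomp Require Import all_boot all_order all_algebra.
From mathcomp Require Import complex mxtens.
From mathcomp Require Import classical_sets reals topology normedtype sequences.


Unset Strict Implicit.
Unset Printing Implicit Defensive.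

Import Order.TTheory GRing.Theory Num.Theory.
Local Open Scope ring_scope.
Local Open Scope classical_set_scope.

Section QA.
Variable R : realType.
Local Notation C := R[i].

Definition sqn (z : C) : R := complex.Re z ^+ 2 + complex.Im z ^+ 2.

Definition cconj (z : C) : C := Complex (complex.Re z) (- complex.Im z).
Definition adj {m n} (M : 'M[C]_(m, n)) : 'M[C]_(n, m) :=
  \matrix_(i, j) cconj (M j i).

Definition cinner {n} (u v : 'cV[C]_n) : C := \sum_i cconj (u i 0) * v i 0.
Definition vnorm2 {n} (v : 'cV[C]_n) : R := \sum_i sqn (v i 0).

(* A quantum automaton over alphabet S: Hilbert space C^dim, initial state,
   one matrix per letter, and the final subspace F given by its orthogonal
   projection P_F. *)
Record qaut (S : finType) := QAut {
  qdim : nat;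
  qs0 : 'cV[C]_qdim;
  qU : S -> 'M[C]_qdim;
  qP : 'M[C]_qdim }.
Arguments qdim {S}.
Arguments qs0 {S}.
Arguments qU {S}.
Arguments qP {S}.

Definition unitary {n} (M : 'M[C]_n) := adj M *m M = 1%:M.
Definition orth_proj {n} (P : 'M[C]_n) := adj P = P /\ P *m P = P.

Definition is_qaut {S : finType} (A : qaut S) :=
  vnorm2 (qs0 A) = 1 /\ (forall s, unitary (qU A s)) /\ orth_proj (qP A).

Definition inF {S : finType} (A : qaut S) (v : 'cV[C]_(qdim A)) :=
  qP A *m v = v.

(* U_x |v> for a finite word x = s1...sm : U_{sm} ... U_{s1} |v> *)
Definition run_word {S : finType} (A : qaut S) (x : seq S) (v : 'cV[C]_(qdim A)) :=
  foldl (fun u s => qU A s *m u) v x.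

Definition wprefix {S : finType} (w : nat -> S) (n : nat) : seq S := mkseq w n.

Definition fMO {S : finType} (A : qaut S) (x : seq S) : R :=
  vnorm2 (qP A *m run_word A x (qs0 A)).

Definition ndstate {S : finType} (A : qaut S) (w : nat -> S) (n : nat) :=
  run_word A (wprefix w n) (qs0 A).

Definition fND {S : finType} (A : qaut S) (w : nat -> S) : R :=
  sup [set r | exists (psi : 'cV[C]_(qdim A)) (ns : nat -> nat),
         [/\ vnorm2 psi = 1, inF A psi, {homo ns : i j / (i < j)%N} &
             r = inf [set sqn (cinner psi (ndstate A w (ns i))) | i in setT]]].

Definition qdsum {S : finType} (a b : C) (A B : qaut S) : qaut S :=
  @QAut S (qdim A + qdim B)
    (col_mx (a *: qs0 A) (b *: qs0 B))
    (fun s => block_mx (qU A s) 0 0 (qU B s))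
    (block_mx (qP A) 0 0 (qP B)).

(* tensor product A (x) B (Kronecker product; projection onto F^A (x) F^B
   is P_A (x) P_B) *)
Definition qtens {S : finType} (A B : qaut S) : qaut S :=
  @QAut S (qdim A * qdim B)
    (qs0 A *t qs0 B)
    (fun s => qU A s *t qU B s)
    (qP A *t qP B).

(* ortho-complement: F replaced by F^perp, whose projection is 1 - P_F *)
Definition qperp {S : finType} (A : qaut S) : qaut S :=
  @QAut S (qdim A) (qs0 A) (qU A) (1%:M - qP A).

End QA.
Arguments qdim {R S}.
Arguments qs0 {R S}.
Arguments qU {R S}.
Arguments qP {R S}.
Arguments sqn {R}.
Arguments cinner {R n}.
Arguments vnorm2 {R n}.
Arguments is_qaut {R S}.
Arguments fMO {R S}.
Arguments fND {R S}.
Arguments qdsum {R S}.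
Arguments qtens {R S}.
Arguments qperp {R S}.

From mathcomp Require Import all_boot all_order all_algebra.
From mathcomp Require Import complex mxtens.
From mathcomp Require Import classical_sets reals topology normedtype sequences.
From mathcomp Require Import ring lra boolp.
Import Order.TTheory GRing.Theory Num.Theory numFieldNormedType.Exports.
Local Open Scope ring_scope.
Local Open Scope classical_set_scope.

(** The non-disturbing value is a limit superior:
   f^ND_A(w) = limsup_n f^MO_A(w_n).
   For a unit psi in F, Cauchy-Schwarz gives |<psi|s_n>|^2 = |<psi|P s_n>|^2
   <= ||P s_n||^2 = f^MO_A(w_n).  Conversely, if ||P s_n||^2 >= x infinitely
   often, by compactness some subsequence P s_{n_k} converges to a v with
   ||v||^2 >= x, and psi = P v / ||P v|| satisfies
   |<psi|s_{n_k}>|^2 >= Re<v|P s_{n_k}>^2 / ||v||^2 --> ||v||^2.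
   On runs, f^MO of aA (+) bB, A (x) B and A^perp is |a|^2 f^MO_A + |b|^2 f^MO_B,
   f^MO_A f^MO_B and 1 - f^MO_A, so the three claims are subadditivity and
   monotonicity of limsup, its submultiplicativity on [0,1]-valued sequences,
   and limsup u + limsup (1 - u) = 1 + limsup u - liminf u. *)

Lemma tensmx11 (K : pzRingType) {m n} :
  (1%:M : 'M[K]_m) *t (1%:M : 'M[K]_n) = 1%:M.
Proof.
apply/matrixP => i j.
case: (mxtens_indexP i) => i1 i2; case: (mxtens_indexP j) => j1 j2.
rewrite tensmxE !mxE (inj_eq (can_inj (@mxtens_indexK m n))) xpair_eqE.
by do 2 case: eqP => _; rewrite /= ?(mulr1n, mulr0n, mulr1, mul0r, mulr0).
Qed.

Section ComplexHilbertSpace.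
Context {R : realType}.
Local Notation C := R[i].
Local Open Scope complex_scope.
Implicit Types (z : C).

Lemma cconjE z : cconj R z = z^*%C.
Proof. by case: z. Qed.

Lemma sqnE z : (sqn z)%:C = z^*%C * z.
Proof. case: z => a b; rewrite /sqn /=; simpc; congr (_ +i* _); ring. Qed.

Lemma sqn_ge0 z : 0 <= sqn z.
Proof. by rewrite /sqn addr_ge0 // sqr_ge0. Qed.

Lemma sqnM (x y : C) : sqn (x * y) = sqn x * sqn y.
Proof. case: x => a b; case: y => c d; rewrite /sqn /=; simpc => /=; ring. Qed.

Lemma sqn_conj z : sqn z^*%C = sqn z.
Proof. case: z => a b; rewrite /sqn /=; ring. Qed.

Lemma sqn_real (r : R) : sqn r%:C = r ^+ 2.
Proof. rewrite /sqn /=; ring. Qed.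

Lemma Re_sqr_le_sqn z : complex.Re z ^+ 2 <= sqn z.
Proof. by rewrite /sqn lerDl sqr_ge0. Qed.

Lemma sqn_eq0 z : sqn z = 0 -> z = 0.
Proof.
case: z => a b; rewrite /sqn /= => /eqP; rewrite paddr_eq0 ?sqr_ge0 //.
by rewrite !sqrf_eq0 => /andP[/eqP-> /eqP->].
Qed.

Lemma adjE {m n} (M : 'M[C]_(m, n)) : adj R M = (map_mx conjc M)^T.
Proof. by apply/matrixP => i j; rewrite !mxE cconjE. Qed.

Lemma adjM {m n p} (M : 'M[C]_(m, n)) (N : 'M[C]_(n, p)) :
  adj R (M *m N) = adj R N *m adj R M.
Proof. by rewrite !adjE map_mxM trmx_mul. Qed.

Lemma adjD {m n} (M N : 'M[C]_(m, n)) : adj R (M + N) = adj R M + adj R N.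
Proof. by rewrite !adjE map_mxD linearD. Qed.

Lemma adjN {m n} (M : 'M[C]_(m, n)) : adj R (- M) = - adj R M.
Proof. by rewrite !adjE map_mxN linearN. Qed.

Lemma adjZ {m n} z (M : 'M[C]_(m, n)) : adj R (z *: M) = z^*%C *: adj R M.
Proof. by apply/matrixP => i j; rewrite !mxE !cconjE rmorphM. Qed.

Lemma adj0 {m n} : adj R (0 : 'M[C]_(m, n)) = 0.
Proof. by rewrite adjE map_mx0 trmx0. Qed.

Lemma adj1 {n} : adj R (1%:M : 'M[C]_n) = 1%:M.
Proof. by rewrite adjE map_mx1 trmx1. Qed.

Lemma adj_block {m1 m2 n1 n2} (A : 'M[C]_(m1, n1)) (B : 'M[C]_(m1, n2))
    (A' : 'M[C]_(m2, n1)) (B' : 'M[C]_(m2, n2)) :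
  adj R (block_mx A B A' B') = block_mx (adj R A) (adj R A') (adj R B) (adj R B').
Proof. by rewrite !adjE map_block_mx tr_block_mx. Qed.

Lemma adj_tens {m n m' n'} (A : 'M[C]_(m, n)) (B : 'M[C]_(m', n')) :
  adj R (A *t B) = adj R A *t adj R B.
Proof. by rewrite !adjE map_mxT trmx_tens. Qed.

Lemma cinnerE {n} (u v : 'cV[C]_n) : cinner u v = (adj R u *m v) 0 0.
Proof. by rewrite /cinner mxE; apply: eq_bigr => i _; rewrite mxE. Qed.

Lemma vnorm2E {n} (v : 'cV[C]_n) : (vnorm2 v)%:C = cinner v v.
Proof.
rewrite /vnorm2 /cinner rmorph_sum; apply: eq_bigr => i _.
by rewrite cconjE -sqnE.
Qed.

Lemma vnorm2_ge0 {n} (v : 'cV[C]_n) : 0 <= vnorm2 v.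
Proof. by apply: sumr_ge0 => i _; apply: sqn_ge0. Qed.

Lemma vnorm2_eq0 {n} {v : 'cV[C]_n} : vnorm2 v = 0 -> v = 0.
Proof.
move=> /psumr_eq0P v0; apply/matrixP => i j; rewrite (ord1 j) mxE.
by apply: sqn_eq0; apply: v0 => // k _; apply: sqn_ge0.
Qed.

Lemma vnorm2Z {n} z (v : 'cV[C]_n) : vnorm2 (z *: v) = sqn z * vnorm2 v.
Proof. by rewrite /vnorm2 mulr_sumr; apply: eq_bigr => j _; rewrite mxE sqnM. Qed.

Lemma sqn_entry_le_vnorm2 {n} (v : 'cV[C]_n) j : sqn (v j 0) <= vnorm2 v.
Proof.
by rewrite /vnorm2 (bigD1 j) //= lerDl; apply: sumr_ge0 => i _; apply: sqn_ge0.
Qed.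

Lemma vnorm2_col {m n} (u : 'cV[C]_m) (v : 'cV[C]_n) :
  vnorm2 (col_mx u v) = vnorm2 u + vnorm2 v.
Proof.
rewrite /vnorm2 big_split_ord.
by congr (_ + _); apply: eq_bigr => i _; rewrite ?col_mxEu ?col_mxEd.
Qed.

Lemma vnorm2_tens {m n} (u : 'cV[C]_m) (v : 'cV[C]_n) :
  vnorm2 (u *t v) = vnorm2 u * vnorm2 v.
Proof.
rewrite /vnorm2 mulr_sum; apply: eq_bigr => i _; rewrite mxE sqnM.
by rewrite !(ord1 (mxtens_unindex _).1) !(ord1 (mxtens_unindex _).2).
Qed.

Lemma cinner_adjl {m n} (M : 'M[C]_(m, n)) (u : 'cV[C]_n) (v : 'cV[C]_m) :
  cinner (M *m u) v = cinner u (adj R M *m v).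
Proof. by rewrite !cinnerE adjM mulmxA. Qed.

Lemma cinnerC {n} (u v : 'cV[C]_n) : cinner v u = (cinner u v)^*%C.
Proof.
rewrite /cinner rmorph_sum; apply: eq_bigr => i _.
by rewrite !cconjE rmorphM /= conjcK mulrC.
Qed.

Lemma cinner0l {n} (v : 'cV[C]_n) : cinner 0 v = 0.
Proof. by rewrite cinnerE adj0 mul0mx mxE. Qed.

Lemma cinnerDr {n} (u v w : 'cV[C]_n) : cinner u (v + w) = cinner u v + cinner u w.
Proof. by rewrite !cinnerE mulmxDr mxE. Qed.

Lemma cinnerDl {n} (u v w : 'cV[C]_n) : cinner (v + w) u = cinner v u + cinner w u.
Proof. by rewrite !cinnerE adjD mulmxDl mxE. Qed.

Lemma cinnerNr {n} (u v : 'cV[C]_n) : cinner u (- v) = - cinner u v.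
Proof. by rewrite !cinnerE mulmxN mxE. Qed.

Lemma cinnerNl {n} (u v : 'cV[C]_n) : cinner (- v) u = - cinner v u.
Proof. by rewrite !cinnerE adjN mulNmx mxE. Qed.

Lemma cinnerZr {n} z (u v : 'cV[C]_n) : cinner u (z *: v) = z * cinner u v.
Proof. by rewrite !cinnerE -scalemxAr mxE. Qed.

Lemma cinnerZl {n} z (u v : 'cV[C]_n) : cinner (z *: v) u = z^*%C * cinner v u.
Proof. by rewrite !cinnerE adjZ -scalemxAl mxE. Qed.

Lemma Re_cinner {n} (u v : 'cV[C]_n) : complex.Re (cinner u v) =
  \sum_j (complex.Re (u j 0) * complex.Re (v j 0) +
          complex.Im (u j 0) * complex.Im (v j 0)).
Proof.
rewrite /cinner; elim/big_rec2: _ => [//|j y1 y2 _ <-].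
have ReD (x y : C) : complex.Re (x + y) = complex.Re x + complex.Re y.
  by case: x; case: y.
rewrite ReD; congr (_ + _).
case: (u j 0) => a b; case: (v j 0) => c e.
by rewrite /cconj /=; simpc => /=; ring.
Qed.

Lemma cauchy_schwarz {n} (u v : 'cV[C]_n) :
  sqn (cinner u v) <= vnorm2 u * vnorm2 v.
Proof.
have [u0|] := eqVneq (vnorm2 u) 0.
  by rewrite u0 mul0r (vnorm2_eq0 u0) cinner0l /sqn /= expr0n /= addr0.
move=> u_neq0; have u_gt0 : 0 < vnorm2 u by rewrite lt_def u_neq0 vnorm2_ge0.
set c := cinner u v; set t := c / (vnorm2 u)%:C.
have uC_neq0 : (vnorm2 u)%:C != 0 by rewrite (inj_eq (@complexI R)).
have E : (vnorm2 (v - t *: u))%:C = (vnorm2 v - sqn c / vnorm2 u)%:C.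
  rewrite vnorm2E cinnerDl !cinnerNl !cinnerDr !cinnerNr !cinnerZl !cinnerZr.
  rewrite -!vnorm2E [cinner v u]cinnerC -/c.
  have -> : (vnorm2 v - sqn c / vnorm2 u)%:C =
            (vnorm2 v)%:C - (sqn c)%:C / (vnorm2 u)%:C.
    by rewrite rmorphB rmorphM fmorphV.
  (* [rmorphM] would produce [Num.conj], on which [conjc_inv] does not fire. *)
  have conjcM (x y : C) : (x * y)^*%C = x^*%C * y^*%C := rmorphM _ x y.
  by rewrite sqnE /t conjcM conjc_inv conjc_real; field.
have := vnorm2_ge0 (v - t *: u); move/complexI: E => ->.
by rewrite subr_ge0 ler_pdivrMr // mulrC.
Qed.

Definition normalize {n} (u : 'cV[C]_n) := ((Num.sqrt (vnorm2 u))^-1)%:C *: u.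

Lemma vnorm2_normalize {n} (u : 'cV[C]_n) :
  0 < vnorm2 u -> vnorm2 (normalize u) = 1.
Proof.
move=> u_gt0; rewrite vnorm2Z sqn_real exprVn (sqr_sqrtr (ltW u_gt0)).
by rewrite mulVf ?gt_eqF.
Qed.

Lemma sqn_cinner_normalize {n} (u v : 'cV[C]_n) : 0 < vnorm2 u ->
  sqn (cinner (normalize u) v) = sqn (cinner u v) / vnorm2 u.
Proof.
move=> u_gt0; rewrite cinnerZl sqnM sqn_conj sqn_real exprVn.
by rewrite (sqr_sqrtr (ltW u_gt0)) mulrC.
Qed.

Lemma vnorm2_unitary {n} (U : 'M[C]_n) (v : 'cV[C]_n) :
  unitary R U -> vnorm2 (U *m v) = vnorm2 v.
Proof.
by move=> UU; apply: complexI; rewrite !vnorm2E cinner_adjl mulmxA UU mul1mx.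
Qed.

Lemma unitary_block {m n} {U : 'M[C]_m} {V : 'M[C]_n} :
  unitary R U -> unitary R V -> unitary R (block_mx U 0 0 V).
Proof.
rewrite /unitary => UU VV; rewrite adj_block !adj0 mulmx_block.
by rewrite !mulmx0 !mul0mx !addr0 add0r UU VV -scalar_mx_block.
Qed.

Lemma unitary_tens {m n} {U : 'M[C]_m} {V : 'M[C]_n} :
  unitary R U -> unitary R V -> unitary R (U *t V).
Proof. by rewrite /unitary => UU VV; rewrite adj_tens tensmx_mul UU VV tensmx11.
Qed.

Lemma vnorm2_orth_proj {n} {P : 'M[C]_n} (v : 'cV[C]_n) :
  orth_proj R P -> (vnorm2 (P *m v))%:C = cinner v (P *m v).
Proof. by case=> Pa Pi; rewrite vnorm2E cinner_adjl Pa mulmxA Pi. Qed.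

Lemma orth_projC {n} {P : 'M[C]_n} : orth_proj R P -> orth_proj R (1%:M - P).
Proof.
case=> Pa Pi; split; first by rewrite adjD adjN adj1 Pa.
by rewrite mulmxBl !mulmxBr !mul1mx mulmx1 Pi subrr subr0.
Qed.

Lemma vnorm2_orth_split {n} {P : 'M[C]_n} (v : 'cV[C]_n) : orth_proj R P ->
  vnorm2 v = vnorm2 (P *m v) + vnorm2 ((1%:M - P) *m v).
Proof.
move=> PP; have PC := orth_projC PP.
apply: complexI; rewrite rmorphD /= !vnorm2_orth_proj //.
by rewrite vnorm2E mulmxBl mul1mx cinnerDr cinnerNr addrC subrK.
Qed.

Lemma orth_proj_block {m n} {P : 'M[C]_m} {Q : 'M[C]_n} :
  orth_proj R P -> orth_proj R Q -> orth_proj R (block_mx P 0 0 Q).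
Proof.
case=> Pa Pi [Qa Qi]; split; first by rewrite adj_block !adj0 Pa Qa.
by rewrite mulmx_block !mulmx0 !mul0mx !addr0 add0r Pi Qi.
Qed.

Lemma orth_proj_tens {m n} {P : 'M[C]_m} {Q : 'M[C]_n} :
  orth_proj R P -> orth_proj R Q -> orth_proj R (P *t Q).
Proof.
case=> Pa Pi [Qa Qi]; split; first by rewrite adj_tens Pa Qa.
by rewrite tensmx_mul Pi Qi.
Qed.

End ComplexHilbertSpace.

Lemma increasing_geq_id {f : nat -> nat} :
  {homo f : m n / (m < n)%N} -> forall n, (n <= f n)%N.
Proof.
by move=> f_incr; elim=> [|n IHn] //; apply: leq_ltn_trans IHn (f_incr _ _ _).
Qed.

Lemma frequently_subseq (Q : nat -> Prop) :
  (forall N, exists n, (N <= n)%N /\ Q n) ->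
  exists phi : nat -> nat, {homo phi : m n / (m < n)%N} /\ forall k, Q (phi k).
Proof.
move=> /choice[g g_spec]; pose phi k := iter k (fun m => g m.+1) (g 0%N).
exists phi; split.
  apply: homo_ltn; first by move=> ? ? ?; apply: ltn_trans.
  by move=> k; case: (g_spec (phi k).+1).
by case=> [|k]; [case: (g_spec 0%N) | case: (g_spec (phi k).+1)].
Qed.

Lemma cvg_subseq {T : topologicalType} (u : nat -> T) (l : T) (phi : nat -> nat) :
  {homo phi : m n / (m < n)%N} -> u @ \oo --> l -> (u \o phi) @ \oo --> l.
Proof.
move=> phi_incr ul; apply: cvg_comp ul => A [N _ NA]; exists N => // n /= Nn.
exact/NA/(leq_trans Nn (increasing_geq_id phi_incr n)).
Qed.

Section RealSequences.
Context {R : realType}.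

Lemma bolzano_weierstrass_seq {I : eqType} (r : seq I) (u : I -> nat -> R) M :
  (forall i n, `|u i n| <= M) ->
  exists phi : nat -> nat,
    {homo phi : m n / (m < n)%N} /\ forall i, i \in r -> cvgn (u i \o phi).
Proof.
move=> u_bd; elim: r => [|i r [phi [phi_incr IH]]]; first by exists id; split.
have ui_bd : bounded_fun (u i \o phi).
  exists M; split; first by rewrite num_real.
  by move=> M' MM' n _; apply: le_trans (u_bd _ _) (ltW MM').
have [psi psi_incr psi_cvg] := bolzano_weierstrass ui_bd.
have psi_incr' : {homo psi : m n / (m < n)%N}.
  by move=> m n; rewrite !ltnNge -!leEnat psi_incr.
exists (phi \o psi); split; first by move=> m n mn; apply/phi_incr/psi_incr'.
move=> j; rewrite in_cons => /orP[/eqP-> //|jr].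
have /cvg_ex[l ul] := IH j jr.
by apply/cvg_ex; exists l; apply: cvg_subseq psi_incr' ul.
Qed.

Lemma cvg_sum {I : Type} (r : seq I) (u : I -> nat -> R) (l : I -> R) :
  (forall i, u i @ \oo --> l i) ->
  (fun n => \sum_(i <- r) u i n) @ \oo --> \sum_(i <- r) l i.
Proof.
move=> ul; elim: r => [|i r IHr].
  by rewrite big_nil; under eq_fun do rewrite big_nil; exact: cvg_cst.
by rewrite big_cons; under eq_fun do rewrite big_cons; exact: cvgD.
Qed.

Lemma inf_nneg_seq {f : nat -> R} : (forall i, 0 <= f i) ->
  0 <= inf [set f i | i in setT] /\ forall i, inf [set f i | i in setT] <= f i.
Proof.
move=> f_ge0; split=> [|i].
  by apply: lb_le_inf => [|_ [i _ <-]]; [exists (f 0%N), 0%N | exact: f_ge0].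
by apply: ge_inf; [exists 0 => _ [j _ <-] | exists i].
Qed.

End RealSequences.

Section Limsup.
Context {R : realFieldType}.
Implicit Types (u v : nat -> R) (l p q X Y Z W : R).

Definition is_limsup u l :=
  (forall y, (forall e, 0 < e -> exists N, forall n, (N <= n)%N -> u n <= y + e) ->
     l <= y) /\
  (forall x, (forall N, exists n, (N <= n)%N /\ x <= u n) -> x <= l).

Section LimsupTheory.
Context {u : nat -> R} {l : R}.
Hypothesis ul : is_limsup u l.

Lemma is_limsup_ev e : 0 < e -> exists N, forall n, (N <= n)%N -> u n <= l + e.
Proof.
move=> e_gt0; case: ul => _ ul_ge; apply: contrapT => no_N.
suff : l + e <= l by rewrite gerDl leNgt e_gt0.
apply: ul_ge => N.
have /existsNP[n /not_implyP[Nn /negP]] : ~ forall n, (N <= n)%N -> u n <= l + e.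
  by move=> uN; apply: no_N; exists N.
by rewrite -ltNge => /ltW; exists n.
Qed.

Lemma is_limsup_fr e : 0 < e -> forall N, exists n, (N <= n)%N /\ l - e <= u n.
Proof.
move=> e_gt0 N; case: ul => ul_le _; apply: contrapT => no_n.
suff : l <= l - e by lra.
apply: ul_le => e' e'_gt0; exists N => n Nn.
have /negP : ~ l - e <= u n by move=> un; apply: no_n; exists n.
by rewrite -ltNge => /ltW /le_trans; apply; rewrite lerDl ltW.
Qed.

Lemma is_limsup_ge0 : (forall n, 0 <= u n) -> 0 <= l.
Proof. by move=> u_ge0; case: ul => _; apply => N; exists N. Qed.

Lemma is_limsup_le1 : (forall n, u n <= 1) -> l <= 1.
Proof.
move=> u_le1; case: ul => + _; apply => e e_gt0; exists 0%N => n _.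
by apply: le_trans (u_le1 n) _; rewrite lerDl ltW.
Qed.

Lemma is_limsup_lim m : u @ \oo --> m -> l = m.
Proof.
move=> /cvgrPdist_le um; case: ul => ul_le ul_ge.
apply/eqP; rewrite eq_le; apply/andP; split.
  apply: ul_le => e e_gt0; have [N _ uN] := um e e_gt0; exists N => n Nn.
  by have := uN n Nn; rewrite ler_distl lerBlDr => /andP[].
apply/ler_addgt0Pr => e e_gt0; rewrite -lerBlDr; apply: ul_ge => N.
have [N' _ uN'] := um e e_gt0; exists (maxn N N'); split; first exact: leq_maxl.
by have := uN' _ (leq_maxr N N'); rewrite ler_distl !lerBlDr => /andP[].
Qed.

End LimsupTheory.

Lemma is_limsup_eq {u v l} : is_limsup u l -> u =1 v -> is_limsup v l.
Proof. by move=> ul /funext <-. Qed.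

Lemma is_limsupD_le {u v p q X Y Z} : 0 <= p -> 0 <= q ->
  is_limsup u X -> is_limsup v Y -> is_limsup (fun n => p * u n + q * v n) Z ->
  Z <= p * X + q * Y.
Proof.
move=> p_ge0 q_ge0 uX vY [Z_le _]; apply: Z_le => e e_gt0.
pose e' := e / (p + q + 1).
have e'_gt0 : 0 < e' by rewrite divr_gt0 // ltr_wpDl // addr_ge0.
have pqe' : p * e' + q * e' = e - e'.
  by rewrite /e'; field; rewrite lt0r_neq0 // ltr_wpDl // addr_ge0.
have [N1 uN1] := is_limsup_ev uX _ e'_gt0.
have [N2 vN2] := is_limsup_ev vY _ e'_gt0.
exists (maxn N1 N2) => n Nn.
have := ler_wpM2l p_ge0 (uN1 n (leq_trans (leq_maxl _ _) Nn)).
have := ler_wpM2l q_ge0 (vN2 n (leq_trans (leq_maxr _ _) Nn)).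
lra.
Qed.

Lemma is_limsup_leZ {u v p X Y} : 0 <= p -> (forall n, p * u n <= v n) ->
  is_limsup u X -> is_limsup v Y -> p * X <= Y.
Proof.
move=> p_ge0 puv uX [_ Y_ge]; apply/ler_addgt0Pr => e e_gt0.
rewrite -lerBlDr; apply: Y_ge => N.
pose e' := e / (p + 1).
have e'_gt0 : 0 < e' by rewrite divr_gt0 // ltr_wpDl.
have pe' : p * e' = e - e'.
  by rewrite /e'; field; rewrite lt0r_neq0 // ltr_wpDl.
have [n [Nn un]] := is_limsup_fr uX _ e'_gt0 N; exists n; split => //.
have := ler_wpM2l p_ge0 un; have := puv n; lra.
Qed.

Lemma is_limsupM_le {u v X Y Z} :
  (forall n, 0 <= u n <= 1) -> (forall n, 0 <= v n <= 1) ->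
  is_limsup u X -> is_limsup v Y -> is_limsup (fun n => u n * v n) Z -> Z <= X * Y.
Proof.
move=> u01 v01 uX vY [Z_le _]; apply: Z_le => e e_gt0.
have [X0 X1] : 0 <= X /\ X <= 1.
  by split; [apply: is_limsup_ge0 uX _ | apply: is_limsup_le1 uX _] => n;
    case/andP: (u01 n).
have [Y0 Y1] : 0 <= Y /\ Y <= 1.
  by split; [apply: is_limsup_ge0 vY _ | apply: is_limsup_le1 vY _] => n;
    case/andP: (v01 n).
pose d := Num.min 1 (e / 3).
have d_gt0 : 0 < d by rewrite lt_min ltr01 divr_gt0.
have d_le1 : d <= 1 by rewrite ge_min lexx.
have d_le : d <= e / 3 by rewrite ge_min lexx orbT.
have [N1 uN1] := is_limsup_ev uX _ d_gt0.
have [N2 vN2] := is_limsup_ev vY _ d_gt0.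
exists (maxn N1 N2) => n Nn.
have /andP[un0 _] := u01 n; have /andP[vn0 _] := v01 n.
have : u n * v n <= (X + d) * (Y + d).
  by apply: ler_pM => //; [apply: uN1 | apply: vN2];
    apply: leq_trans Nn; rewrite ?leq_maxl ?leq_maxr.
have : d * X <= d by rewrite ler_piMr // ltW.
have : d * Y <= d by rewrite ler_piMr // ltW.
have : d * d <= d by rewrite ler_piMr // ltW.
lra.
Qed.

Lemma is_limsup_compl {u X W} : is_limsup u X -> is_limsup (fun n => 1 - u n) W ->
  1 <= X + W /\ (X + W = 1 <-> exists m : R, u @ \oo --> m).
Proof.
move=> uX uW; split.
  rewrite -lerBlDl; apply/ler_addgt0Pr => e e_gt0; rewrite -lerBlDr.
  case: (uW) => _; apply => N; have [N0 uN0] := is_limsup_ev uX _ e_gt0.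
  exists (maxn N N0); split; first exact: leq_maxl.
  by have := uN0 _ (leq_maxr N N0); lra.
split=> [XW1|[m um]].
  exists X; apply/cvgrPdist_le => e e_gt0.
  have [N1 uN1] := is_limsup_ev uX _ e_gt0.
  have [N2 uN2] := is_limsup_ev uW _ e_gt0.
  exists (maxn N1 N2) => // n /= Nn.
  have := uN1 n (leq_trans (leq_maxl _ _) Nn).
  have := uN2 n (leq_trans (leq_maxr _ _) Nn).
  by rewrite ler_distl; lra.
have uW1 := is_limsup_lim uW _ (cvgB (cvg_cst (1 : R)) um).
by rewrite (is_limsup_lim uX _ um) uW1; lra.
Qed.

Lemma half_le_max X Y Z : Z <= X + Y -> Z / 2 <= Num.max X Y.
Proof.
move=> ZXY; rewrite le_max.
by have [XY|/ltW YX] := leP X Y; apply/orP; [right | left]; lra.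
Qed.

End Limsup.

Section EntrywiseConvergence.
Context {R : realType} {d : nat}.
Local Notation C := R[i].
Implicit Types (u : nat -> 'cV[C]_d) (v w : 'cV[C]_d).

(* The library puts no topology on [R[i]], so convergence of vectors is stated
   on the real and imaginary parts of their entries. *)
Definition cvg_entrywise u v := forall j,
  (fun k => complex.Re (u k j 0)) @ \oo --> complex.Re (v j 0) /\
  (fun k => complex.Im (u k j 0)) @ \oo --> complex.Im (v j 0).

Lemma cvg_entrywise_subseq u : (forall k, vnorm2 (u k) <= 1) ->
  exists (phi : nat -> nat) v,
    {homo phi : m n / (m < n)%N} /\ cvg_entrywise (u \o phi) v.
Proof.
move=> u_le1.
pose x (jb : 'I_d * bool) k := let z := u k jb.1 0 in
  if jb.2 then complex.Re z else complex.Im z.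
have x_le1 jb k : `|x jb k| <= 1.
  have := le_trans (sqn_entry_le_vnorm2 (u k) jb.1) (u_le1 k).
  rewrite /x /sqn; move: (complex.Re _) (complex.Im _) => p q pq.
  by case: jb.2; rewrite ler_norml; apply/andP; split; nra.
have [phi [phi_incr x_cvg]] :=
  bolzano_weierstrass_seq (enum {: 'I_d * bool}) _ _ x_le1.
exists phi, (\col_j (limn (x (j, true) \o phi) +i* limn (x (j, false) \o phi)))%C.
split=> // j; rewrite mxE /=.
by split; [exact: (x_cvg (j, true) (mem_enum _ _)) |
           exact: (x_cvg (j, false) (mem_enum _ _))].
Qed.

Lemma cvg_entrywise_vnorm2 u v :
  cvg_entrywise u v -> (fun k => vnorm2 (u k)) @ \oo --> vnorm2 v.
Proof.
move=> uv; apply: cvg_sum => j; have [uRe uIm] := uv j.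
by apply: cvgD; apply: cvgM.
Qed.

Lemma cvg_entrywise_Re_cinner u v w : cvg_entrywise u v ->
  (fun k => complex.Re (cinner w (u k))) @ \oo --> complex.Re (cinner w v).
Proof.
move=> uv; under eq_fun do rewrite Re_cinner; rewrite Re_cinner.
apply: cvg_sum => j; have [uRe uIm] := uv j.
by apply: cvgD; apply: cvgM => //; apply: cvg_cst.
Qed.

End EntrywiseConvergence.

Section NonDisturbingValue.
Context {R : realType} {d : nat}.
Variables (P : 'M[R[i]]_d) (s : nat -> 'cV[R[i]]_d).
Local Notation C := R[i].
Hypothesis P_proj : orth_proj R P.
Hypothesis s_unit : forall n, vnorm2 (s n) = 1.

Definition nd_witnesses : set R :=
  [set r | exists (psi : 'cV[C]_d) (ns : nat -> nat),
    [/\ vnorm2 psi = 1, P *m psi = psi, {homo ns : i j / (i < j)%N} &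
         r = inf [set sqn (cinner psi (s (ns i))) | i in setT]]].

(* [fND A w] unfolds to [nd_value (qP A) (ndstate R A w)]. *)
Definition nd_value : R := sup nd_witnesses.

Lemma vnorm2_proj_le1 n : vnorm2 (P *m s n) <= 1.
Proof.
by rewrite -(s_unit n) (vnorm2_orth_split (s n) P_proj) lerDl vnorm2_ge0.
Qed.

Lemma sqn_cinner_le_proj psi n : vnorm2 psi = 1 -> P *m psi = psi ->
  sqn (cinner psi (s n)) <= vnorm2 (P *m s n).
Proof.
move=> psi1 Ppsi; case: P_proj => Pa _; rewrite -Ppsi cinner_adjl Pa.
by apply: le_trans (cauchy_schwarz _ _) _; rewrite psi1 mul1r.
Qed.

Lemma nd_witnesses_ub : has_ubound nd_witnesses.
Proof.
exists 1 => _ [psi [ns [psi1 Ppsi _ ->]]].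
have [_ /(_ 0%N) inf_le] :=
  inf_nneg_seq (fun i => sqn_ge0 (cinner psi (s (ns i)))).
apply: le_trans inf_le (le_trans (sqn_cinner_le_proj _ _ psi1 Ppsi) _).
exact: vnorm2_proj_le1.
Qed.

Lemma nd_value_ge_witness psi (ns : nat -> nat) r :
  vnorm2 psi = 1 -> P *m psi = psi -> {homo ns : i j / (i < j)%N} ->
  (forall i, r <= sqn (cinner psi (s (ns i)))) -> r <= nd_value.
Proof.
move=> psi1 Ppsi ns_incr r_le.
apply: le_trans (ub_le_sup nd_witnesses_ub _); last by exists psi, ns.
apply: lb_le_inf => [|_ [i _ <-] //].
by exists (sqn (cinner psi (s (ns 0%N)))), 0%N.
Qed.

Lemma nd_value_ge0 : 0 <= nd_value.
Proof.
rewrite /nd_value.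
have [->|/set0P[r Wr]] := eqVneq nd_witnesses set0; first by rewrite sup0.
apply: le_trans (ub_le_sup nd_witnesses_ub Wr).
case: Wr => psi [ns [_ _ _ ->]].
by apply: (inf_nneg_seq _).1 => i; apply: sqn_ge0.
Qed.

Lemma nd_value_le y :
  (forall e, 0 < e ->
     exists N, forall n, (N <= n)%N -> vnorm2 (P *m s n) <= y + e) ->
  nd_value <= y.
Proof.
move=> ev; apply/ler_addgt0Pr => e e_gt0; have [N uN] := ev e e_gt0.
rewrite /nd_value.
have [->|/set0P W_neq0] := eqVneq nd_witnesses set0.
  by rewrite sup0; apply: le_trans (vnorm2_ge0 _) (uN N (leqnn N)).
apply: ge_sup => // _ [psi [ns [psi1 Ppsi ns_incr ->]]].
have [_ inf_le] := inf_nneg_seq (fun i => sqn_ge0 (cinner psi (s (ns i)))).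
apply: le_trans (inf_le N) (le_trans (sqn_cinner_le_proj _ _ psi1 Ppsi) (uN _ _)).
exact: increasing_geq_id.
Qed.

Lemma nd_value_ge_cvg (idx : nat -> nat) v : {homo idx : i j / (i < j)%N} ->
  cvg_entrywise (fun k => P *m s (idx k)) v -> vnorm2 v <= nd_value.
Proof.
move=> idx_incr Psv; set V := vnorm2 v.
have [->|V_neq0] := eqVneq V 0; first exact: nd_value_ge0.
have V_gt0 : 0 < V by rewrite lt_def V_neq0 vnorm2_ge0.
case: (P_proj) => Pa Pi.
pose g k := complex.Re (cinner (P *m v) (s (idx k))).
have g_cvg : g @ \oo --> V.
  have -> : g = fun k => complex.Re (cinner v (P *m s (idx k))).
    by apply/funext => k; rewrite /g cinner_adjl Pa.
  by have := cvg_entrywise_Re_cinner _ _ v Psv; rewrite -vnorm2E.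
set N := vnorm2 (P *m v).
have N_gt0 : 0 < N.
  rewrite lt_def vnorm2_ge0 andbT; apply/eqP => /vnorm2_eq0 Pv0.
  have [K _ gK] := cvgr_gt V g_cvg 0 V_gt0.
  by have := gK K (leqnn K); rewrite /g Pv0 cinner0l ltxx.
have N_le : N <= V by rewrite /N /V (vnorm2_orth_split v P_proj) lerDl vnorm2_ge0.
pose psi := normalize (P *m v).
have Ppsi : P *m psi = psi by rewrite -scalemxAr mulmxA Pi.
have g_le k : g k ^+ 2 / V <= sqn (cinner psi (s (idx k))).
  rewrite sqn_cinner_normalize //; apply: ler_pM; first exact: sqr_ge0.
  - by rewrite invr_ge0 ltW.
  - exact: Re_sqr_le_sqn.
  - by rewrite lef_pV2 ?posrE.
have h_cvg : (fun k => g k ^+ 2 / V) @ \oo --> V.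
  have := cvgM (cvgM g_cvg g_cvg) (cvg_cst V^-1).
  by rewrite mulfK ?gt_eqF //; exact.
apply/ler_addgt0Pr => e e_gt0; rewrite -lerBlDr.
have Ve : V - e < V by rewrite ltrBlDr ltrDl.
have [K _ hK] := cvgr_ge V h_cvg (V - e) Ve.
apply: (@nd_value_ge_witness psi (fun i => idx (K + i)%N)) => //.
- exact: vnorm2_normalize.
- by move=> i j ij; apply: idx_incr; rewrite ltn_add2l.
- by move=> i; apply: le_trans (hK _ (leq_addr _ _)) (g_le _).
Qed.

Lemma nd_value_ge x :
  (forall N, exists n, (N <= n)%N /\ x <= vnorm2 (P *m s n)) -> x <= nd_value.
Proof.
move=> /frequently_subseq[phi [phi_incr x_le]].
have [psi [v [psi_incr Psv]]] :=
  cvg_entrywise_subseq _ (fun k => vnorm2_proj_le1 (phi k)).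
apply: le_trans (@nd_value_ge_cvg (phi \o psi) v _ Psv); last first.
  by move=> i j ij; apply/phi_incr/psi_incr.
rewrite leNgt; apply/negP => vx.
have [N _ vN] := cvgr_lt (vnorm2 v) (cvg_entrywise_vnorm2 _ _ Psv) x vx.
by have := vN N (leqnn N); rewrite ltNge x_le.
Qed.

Lemma nd_value_is_limsup : is_limsup (fun n => vnorm2 (P *m s n)) nd_value.
Proof. by split; [exact: nd_value_le | exact: nd_value_ge]. Qed.

End NonDisturbingValue.

Section QuantumAutomata.
Context {R : realType} {S : finType}.
Implicit Types (A B : qaut R S) (x : seq S).

Lemma run_word_cons A s x v :
  run_word R A (s :: x) v = run_word R A x (qU A s *m v).
Proof. by []. Qed.

Lemma vnorm2_run_word A x v :
  (forall s, unitary R (qU A s)) -> vnorm2 (run_word R A x v) = vnorm2 v.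
Proof.
move=> AU; elim: x v => [//|s x IHx] v.
by rewrite run_word_cons IHx vnorm2_unitary.
Qed.

Lemma run_wordZ A x z v : run_word R A x (z *: v) = z *: run_word R A x v.
Proof. by elim: x v => [//|s x IHx] v; rewrite !run_word_cons -scalemxAr IHx. Qed.

Lemma run_word_qdsum a b A B x u v :
  run_word R (qdsum a b A B) x (col_mx u v) =
  col_mx (run_word R A x u) (run_word R B x v).
Proof.
elim: x u v => [//|s x IHx] u v; rewrite !run_word_cons -IHx /=.
by rewrite mul_block_col !mul0mx addr0 add0r.
Qed.

Lemma run_word_qtens A B x (u : 'cV[R[i]]_(qdim A)) (v : 'cV[R[i]]_(qdim B)) :
  run_word R (qtens A B) x (u *t v) = run_word R A x u *t run_word R B x v.
Proof.
elim: x u v => [//|s x IHx] u v; rewrite !run_word_cons -IHx /=.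
by rewrite (@tensmx_mul _ _ _ _ _ 1 1).
Qed.

Lemma is_qaut_qdsum {a b A B} :
  is_qaut A -> is_qaut B -> sqn a + sqn b = 1 -> is_qaut (qdsum a b A B).
Proof.
move=> [A0 [AU AP]] [B0 [BU BP]] ab; split; [|split].
- by rewrite /= vnorm2_col !vnorm2Z A0 B0 !mulr1.
- by move=> s; apply: unitary_block.
- exact: orth_proj_block.
Qed.

Lemma is_qaut_qtens {A B} : is_qaut A -> is_qaut B -> is_qaut (qtens A B).
Proof.
move=> [A0 [AU AP]] [B0 [BU BP]]; split; [|split].
- by rewrite /= vnorm2_tens A0 B0 mulr1.
- by move=> s; apply: unitary_tens.
- exact: orth_proj_tens.
Qed.

Lemma is_qaut_qperp {A} : is_qaut A -> is_qaut (qperp A).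
Proof. by case=> A0 [AU AP]; split; [|split] => //; apply: orth_projC. Qed.

Lemma vnorm2_run_qs0 {A} x : is_qaut A -> vnorm2 (run_word R A x (qs0 A)) = 1.
Proof. by case=> A0 [AU _]; rewrite vnorm2_run_word. Qed.

Lemma fMO_ge0_le1 {A} x : is_qaut A -> 0 <= fMO A x <= 1.
Proof.
move=> qA; rewrite /fMO vnorm2_ge0 -(vnorm2_run_qs0 x qA).
case: qA => _ [_ AP].
by rewrite (vnorm2_orth_split (run_word R A x (qs0 A)) AP) lerDl vnorm2_ge0.
Qed.

Lemma fMO_qdsum a b A B x :
  fMO (qdsum a b A B) x = sqn a * fMO A x + sqn b * fMO B x.
Proof.
rewrite /fMO /= run_word_qdsum !run_wordZ mul_block_col !mul0mx addr0 add0r.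
by rewrite vnorm2_col -!scalemxAr !vnorm2Z.
Qed.

Lemma fMO_qtens A B x : fMO (qtens A B) x = fMO A x * fMO B x.
Proof.
by rewrite /fMO /= run_word_qtens (@tensmx_mul _ _ _ _ _ 1 1) vnorm2_tens.
Qed.

Lemma fMO_qperp {A} x : is_qaut A -> fMO (qperp A) x = 1 - fMO A x.
Proof.
move=> qA; rewrite /fMO /= -(vnorm2_run_qs0 x qA).
rewrite -[run_word R (qperp A) x _]/(run_word R A x (qs0 A)).
case: qA => _ [_ AP].
by rewrite (vnorm2_orth_split (run_word R A x (qs0 A)) AP) [RHS]addrC addKr.
Qed.

Lemma fND_is_limsup {A} w :
  is_qaut A -> is_limsup (fun n => fMO A (wprefix w n)) (fND A w).
Proof.
move=> qA; case: (qA) => _ [_ AP].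
exact: (nd_value_is_limsup _ (ndstate R A w) AP (fun n => vnorm2_run_qs0 _ qA)).
Qed.

End QuantumAutomata.

Theorem proposition3 (R : realType) (S : finType) (A B : qaut R S) (a b : R[i]) :
  is_qaut A -> is_qaut B -> sqn a + sqn b = 1 ->
  forall w : nat -> S,
    (* (1) *)
    [/\ sqn a * fND A w + sqn b * fND B w >= fND (qdsum a b A B) w,
        fND (qdsum a b A B) w >= Num.max (sqn a * fND A w) (sqn b * fND B w) &
        Num.max (sqn a * fND A w) (sqn b * fND B w) >= fND (qdsum a b A B) w / 2]
    (* (2) *)
    /\ fND (qtens A B) w <= fND A w * fND B w
    (* (3) *)
    /\ (fND A w + fND (qperp A) w >= 1 /\
        (fND A w + fND (qperp A) w = 1 <->
           exists l : R, (fun n => fMO A (wprefix w n)) @ \oo --> l)).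
Proof.
move=> qA qB ab w.
have lA := fND_is_limsup w qA; have lB := fND_is_limsup w qB.
have lD := is_limsup_eq (fND_is_limsup w (is_qaut_qdsum qA qB ab))
  (fun n => fMO_qdsum a b A B (wprefix w n)).
have lT := is_limsup_eq (fND_is_limsup w (is_qaut_qtens qA qB))
  (fun n => fMO_qtens A B (wprefix w n)).
have lP := is_limsup_eq (fND_is_limsup w (is_qaut_qperp qA))
  (fun n => fMO_qperp (wprefix w n) qA).
have fA01 n := fMO_ge0_le1 (wprefix w n) qA.
have fB01 n := fMO_ge0_le1 (wprefix w n) qB.
have D_le := is_limsupD_le (sqn_ge0 a) (sqn_ge0 b) lA lB lD.
split; [split=> // | split].
- rewrite ge_max; apply/andP; split.
  + apply: is_limsup_leZ (sqn_ge0 a) _ lA lD => n.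
    by rewrite lerDl mulr_ge0 ?sqn_ge0 //; case/andP: (fB01 n).
  + apply: is_limsup_leZ (sqn_ge0 b) _ lB lD => n.
    by rewrite lerDr mulr_ge0 ?sqn_ge0 //; case/andP: (fA01 n).
- exact: half_le_max.
- exact: is_limsupM_le fA01 fB01 lA lB lT.
- exact: is_limsup_compl lA lP.
Qed.
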